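(* Let $\lambda>0$ and let $H_3=\mathbb{R}^3$ with coordinates $(x,y,z)$ carry the Lorentzian metric $g_2=\frac{1}{\lambda^2}dx^2+dy^2-(x\,dy+dz)^2$, with Levi-Civita connection $\nabla$. Let $e_1=\partial_y-x\partial_z$, $e_2=\lambda\partial_x$, $e_3=\partial_z$, and let $V_3=\lambda\partial_x-\lambda y\partial_z\,(=e_2-\lambda ye_3)$. Then every $V_3$-magnetic curve $\gamma(t)=(x(t),y(t),z(t))$, i.e. every smooth curve with $\nabla_{\gamma'}\gamma'=V_3\wedge\gamma'$, satisfies the system $y''-x'(z'+xy')=yx'+(z'+xy')$, $\frac{x''}{\lambda}+\lambda y'(z'+xy')=-\lambda yy'$, $(z'+xy')'=y'$.
   Context: $(e_1,e_2,e_3)$ is a $g_2$-orthonormal frame with $e_3$ timelike. For $X=\sum X^ie_i$, $Y=\sum Y^ie_i$ the vector product is defined in this frame by $X\wedge Y=(X^2Y^3-X^3Y^2)e_1+(X^3Y^1-X^1Y^3)e_2+(X^2Y^1-X^1Y^2)e_3$. Primes denote derivatives in $t$. *)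

From Stdlib Require Import Reals.
From Coquelicot Require Import Coquelicot.
Open Scope R_scope.

(* Vectors of R^3 (coordinates x,y,z = indices 0,1,2). *)
Definition vec := nat -> R.
Definition mk3 (a b c : R) : vec :=
  fun i => match i with 0%nat => a | 1%nat => b | _ => c end.
Definition sum3 (f : nat -> R) : R := f 0%nat + f 1%nat + f 2%nat.
Definition coord_basis (k : nat) : vec := fun i => if Nat.eqb i k then 1 else 0.

Definition g2 (lam : R) (p : vec) (u v : vec) : R :=
  / (lam ^ 2) * u 0%nat * v 0%nat + u 1%nat * v 1%nat
  - (p 0%nat * u 1%nat + u 2%nat) * (p 0%nat * v 1%nat + v 2%nat).

Definition gcomp (lam : R) (p : vec) (i j : nat) : R :=
  g2 lam p (coord_basis i) (coord_basis j).

Definition dgcomp (lam : R) (a b c : nat) (p : vec) : R :=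
  Derive (fun s => gcomp lam (fun m => p m + s * coord_basis a m) b c) 0.

(* Christoffel symbols of the first kind of the Levi-Civita connection:
   Gamma_{k i j} = 1/2 (d_i g_jk + d_j g_ik - d_k g_ij) = g(nabla_{d_i} d_j, d_k) *)
Definition christoffel1 (lam : R) (k i j : nat) (p : vec) : R :=
  / 2 * (dgcomp lam i j k p + dgcomp lam j i k p - dgcomp lam k i j p).

Definition frame (lam : R) (p : vec) (i : nat) : vec :=
  match i with
  | 0%nat => mk3 0 1 (- p 0%nat)
  | 1%nat => mk3 lam 0 0
  | _ => mk3 0 0 1
  end.
Definition eps (i : nat) : R := if Nat.eqb i 2 then -1 else 1.
(* components of X in the g2-orthonormal frame (e3 timelike) *)
Definition fcoef (lam : R) (p : vec) (X : vec) (i : nat) : R :=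
  eps i * g2 lam p X (frame lam p i).

(* vector product defined in the frame (paper's indices 1,2,3 = 0,1,2 here) *)
Definition wedge (lam : R) (p : vec) (X Y : vec) : vec :=
  let X1 := fcoef lam p X 0 in let X2 := fcoef lam p X 1 in let X3 := fcoef lam p X 2 in
  let Y1 := fcoef lam p Y 0 in let Y2 := fcoef lam p Y 1 in let Y3 := fcoef lam p Y 2 in
  fun m => (X2 * Y3 - X3 * Y2) * frame lam p 0 m
         + (X3 * Y1 - X1 * Y3) * frame lam p 1 m
         + (X2 * Y1 - X1 * Y2) * frame lam p 2 m.

Definition V3 (lam : R) (p : vec) : vec := mk3 lam 0 (- lam * p 1%nat).

Definition pos (x y z : R -> R) (t : R) : vec := mk3 (x t) (y t) (z t).
Definition vel (x y z : R -> R) (t : R) : vec :=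
  mk3 (Derive x t) (Derive y t) (Derive z t).
Definition acc (x y z : R -> R) (t : R) : vec :=
  mk3 (Derive_n x 2 t) (Derive_n y 2 t) (Derive_n z 2 t).

(* g(nabla_{gamma'} gamma', d_k) in coordinates:
   sum_l g_kl gamma''^l + sum_{i,j} Gamma_{kij} gamma'^i gamma'^j *)
Definition cov_acc_lowered (lam : R) (x y z : R -> R) (t : R) (k : nat) : R :=
  sum3 (fun l => gcomp lam (pos x y z t) k l * acc x y z t l)
  + sum3 (fun i => sum3 (fun j =>
       christoffel1 lam k i j (pos x y z t) * vel x y z t i * vel x y z t j)).

(* nabla_{gamma'} gamma' = V3 /\ gamma', tested against every coordinate
   vector d_k (equivalent, since g2 is nondegenerate) *)
Definition magnetic_V3 (lam : R) (x y z : R -> R) : Prop :=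
  forall (t : R) (k : nat), (k < 3)%nat ->
    cov_acc_lowered lam x y z t k
    = g2 lam (pos x y z t)
         (wedge lam (pos x y z t) (V3 lam (pos x y z t)) (vel x y z t))
         (coord_basis k).

Definition smooth_fun (f : R -> R) : Prop := forall (n : nat) (t : R), ex_derive_n f n t.

(** The metric depends on [x] alone ([g_yy = 1 - x^2], [g_yz = -x]), so the
    only Christoffel symbols are those built from [d_x g_yy] and [d_x g_yz],
    and the lowered covariant acceleration of [gamma] has components
    [x''/lam^2 + y' w], [y'' - x w' - x' w] and [-w'], where [w = z' + x y']
    is the [e3]-component of [gamma'].  In the frame one has
    [gamma' = y' e1 + (x'/lam) e2 + w e3] and [V3 = e2 - lam y e3], so
    [V3 /\ gamma' = (w + y x') e1 - lam y y' e2 + y' e3], whose lowered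
    components are [-y y'], [z' + y x'] and [-y'].  Equating the two
    gives [w' = y'] from the third component, and the other two equations
    follow after substituting it. *)

From Pilot Require Import Defs.
From Stdlib Require Import Reals Lra Lia.
From Coquelicot Require Import Coquelicot.
Open Scope R_scope.

Lemma dgcomp_explicit (lam : R) (a b c : nat) (p : vec) :
  dgcomp lam a b c p =
  - coord_basis a 0%nat *
    (coord_basis b 1%nat * (p 0%nat * coord_basis c 1%nat + coord_basis c 2%nat)
     + (p 0%nat * coord_basis b 1%nat + coord_basis b 2%nat) * coord_basis c 1%nat).
Proof.
  unfold dgcomp, gcomp, g2; cbv beta.
  apply is_derive_unique; auto_derive; [exact I | ring].
Qed.

Definition vel_e3 (x y z : R -> R) (s : R) : R := Derive z s + x s * Derive y s.

Section CovariantAcceleration.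

Variables (lam : R) (x y z : R -> R) (t : R).
Hypotheses (Dx : ex_derive x t) (Dy : ex_derive (Derive y) t) (Dz : ex_derive (Derive z) t).

Lemma Derive_vel_e3 :
  Derive (vel_e3 x y z) t = Derive_n z 2 t + Derive x t * Derive y t + x t * Derive_n y 2 t.
Proof.
  unfold vel_e3.
  change (Derive_n z 2 t) with (Derive (Derive z) t).
  change (Derive_n y 2 t) with (Derive (Derive y) t).
  rewrite Derive_plus, Derive_mult; [ring | auto .. | now apply ex_derive_mult].
Qed.

Ltac unfold_cov_acc :=
  unfold cov_acc_lowered, sum3, christoffel1;
  rewrite ?Derive_vel_e3, !dgcomp_explicit;
  cbv [gcomp g2 coord_basis acc Defs.pos vel mk3 vel_e3 Nat.eqb];
  lra.

Lemma cov_acc_lowered_0 :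
  cov_acc_lowered lam x y z t 0 = / lam ^ 2 * Derive_n x 2 t + Derive y t * vel_e3 x y z t.
Proof. unfold_cov_acc. Qed.

Lemma cov_acc_lowered_1 :
  cov_acc_lowered lam x y z t 1 =
  Derive_n y 2 t - x t * Derive (vel_e3 x y z) t - Derive x t * vel_e3 x y z t.
Proof. unfold_cov_acc. Qed.

Lemma cov_acc_lowered_2 : cov_acc_lowered lam x y z t 2 = - Derive (vel_e3 x y z) t.
Proof. unfold_cov_acc. Qed.

End CovariantAcceleration.

Section MagneticForce.

Variables (lam : R) (p : vec).
Hypothesis lam_neq0 : lam <> 0.

Lemma fcoef_frame (v : vec) :
  fcoef lam p v 0 = v 1%nat /\
  fcoef lam p v 1 = v 0%nat / lam /\
  fcoef lam p v 2 = p 0%nat * v 1%nat + v 2%nat.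
Proof.
  unfold fcoef, eps, g2, frame, mk3; simpl.
  split; [|split]; field; exact lam_neq0.
Qed.

Let force_lowered (v : vec) (k : nat) : R :=
  g2 lam p (wedge lam p (V3 lam p) v) (coord_basis k).

Ltac unfold_force v :=
  unfold force_lowered, wedge;
  destruct (fcoef_frame v) as (-> & -> & ->);
  destruct (fcoef_frame (V3 lam p)) as (-> & -> & ->);
  cbv [g2 coord_basis frame V3 mk3 Nat.eqb];
  field; exact lam_neq0.

Lemma magnetic_force_lowered_0 (v : vec) : force_lowered v 0 = - p 1%nat * v 1%nat.
Proof. unfold_force v. Qed.

Lemma magnetic_force_lowered_1 (v : vec) :
  force_lowered v 1 = v 2%nat + p 1%nat * v 0%nat.
Proof. unfold_force v. Qed.

Lemma magnetic_force_lowered_2 (v : vec) : force_lowered v 2 = - v 1%nat.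
Proof. unfold_force v. Qed.

End MagneticForce.

Theorem mainTheorem7 (lam : R) (x y z : R -> R) :
  0 < lam ->
  smooth_fun x -> smooth_fun y -> smooth_fun z ->
  magnetic_V3 lam x y z ->
  forall t : R,
    let w := fun s => Derive z s + x s * Derive y s in
    Derive_n y 2 t - Derive x t * w t = y t * Derive x t + w t /\
    Derive_n x 2 t / lam + lam * Derive y t * w t = - lam * y t * Derive y t /\
    Derive w t = Derive y t.
Proof.
  intros lam_pos Sx Sy Sz magnetic t w.
  assert (lam_neq0 : lam <> 0) by lra.
  pose proof (Sx 1%nat t) as Dx; pose proof (Sy 2%nat t) as Dy; pose proof (Sz 2%nat t) as Dz.
  pose proof (magnetic t 0%nat ltac:(lia)) as E0.
  pose proof (magnetic t 1%nat ltac:(lia)) as E1.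
  pose proof (magnetic t 2%nat ltac:(lia)) as E2.
  rewrite cov_acc_lowered_0, magnetic_force_lowered_0 in E0 by assumption.
  rewrite cov_acc_lowered_1, magnetic_force_lowered_1 in E1 by assumption.
  rewrite cov_acc_lowered_2, magnetic_force_lowered_2 in E2 by assumption.
  change w with (vel_e3 x y z).
  cbv [Defs.pos vel mk3] in E0, E1, E2.
  assert (Dw : Derive (vel_e3 x y z) t = Derive y t) by lra.
  rewrite Dw in E1.
  split; [unfold vel_e3 in *; lra | split; [| exact Dw]].
  replace (Derive_n x 2 t / lam + lam * Derive y t * vel_e3 x y z t)
    with (lam * (/ lam ^ 2 * Derive_n x 2 t + Derive y t * vel_e3 x y z t))
    by (field; exact lam_neq0).
  rewrite E0; ring.
Qed.
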